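(* Let $A_1,\dots,A_N$ be formulae built from variables other than $q$ using only $\cdot$, $\backslash$, $/$. Let $$\Phi = !((s/s)/!\,[]^{-1}A_1),\ !\,[]^{-1}A_1,\ \dots,\ !((s/s)/!\,[]^{-1}A_N),\ !\,[]^{-1}A_N .$$ Then $\Phi$ internalises $\{A_1,\dots,A_N\}$ in $\mathcal{F}^{\mathrm{mult}}_{2015}$, that is: (1) the sequent $\Phi,s\to s$ is derivable in $\mathcal{F}^{\mathrm{mult}}_{2015}$; (2) for every $i\in\{1,\dots,N\}$, all sequences of tree terms $\Delta_1,\Delta_2$ and every formula $C$, if $\Phi,\Delta_1,A_i,\Delta_2\to C$ is derivable in $\mathcal{F}^{\mathrm{mult}}_{2015}$ then so is $\Phi,\Delta_1,\Delta_2\to C$; (3) the sequent $!A_1,\dots,!A_N\to \prod\pi_q(\Phi)$ is derivable in $\mathcal{E}^{\mathrm{mult}}$.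
   Context: $s$ and $q$ are two fixed distinct variables. Formulae are built from a countable set of variables and $\mathbf1$ by $\backslash,/,\cdot$ and the unary $\langle\rangle$, $[]^{-1}$, $!$. Stoup-free bracketed calculus $\mathcal{F}^{\mathrm{mult}}_{2015}$: a tree term is a formula or $[\Xi]$ with $\Xi$ a meta-formula; a meta-formula is a finite sequence of tree terms (empty $\Lambda$); sequents $\Xi\to C$; $\Xi(\Theta)$ designates an occurrence of a meta-formula $\Theta$ which is $\Xi$ itself or the full content of some bracket $[\Theta]$ at any depth. Rules: axioms $A\to A$, $\Lambda\to\mathbf1$; ($/L$) from $\Gamma\to B$ and $\Xi(\Delta_1,C,\Delta_2)\to D$ infer $\Xi(\Delta_1,C/B,\Gamma,\Delta_2)\to D$; ($/R$) from $\Gamma,B\to C$ infer $\Gamma\to C/B$; ($\backslash L$) from $\Gamma\to A$ and $\Xi(\Delta_1,C,\Delta_2)\to D$ infer $\Xi(\Delta_1,\Gamma,A\backslash C,\Delta_2)\to D$; ($\backslash R$) from $A,\Gamma\to C$ infer $\Gamma\to A\backslash C$; ($\cdot L$) from $\Xi(\Delta_1,A,B,\Delta_2)\to D$ infer $\Xi(\Delta_1,A\cdot B,\Delta_2)\to D$; ($\cdot R$) from $\Delta\to A$ and $\Gamma\to B$ infer $\Delta,\Gamma\to A\cdot B$; ($\mathbf1L$) from $\Xi(\Delta_1,\Delta_2)\to A$ infer $\Xi(\Delta_1,\mathbf1,\Delta_2)\to A$; ($[]^{-1}L$) from $\Xi(\Delta_1,A,\Delta_2)\to B$ infer $\Xi(\Delta_1,[[]^{-1}A],\Delta_2)\to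 B$; ($[]^{-1}R$) from $[\Xi]\to A$ infer $\Xi\to[]^{-1}A$; ($\langle\rangle L$) from $\Xi(\Delta_1,[A],\Delta_2)\to B$ infer $\Xi(\Delta_1,\langle\rangle A,\Delta_2)\to B$; ($\langle\rangle R$) from $\Xi\to A$ infer $[\Xi]\to\langle\rangle A$; ($!L$) from $\Xi(\Delta_1,A,\Delta_2)\to C$ infer $\Xi(\Delta_1,!A,\Delta_2)\to C$; ($!P_1$) from $\Xi(\Delta_1,!A,\Phi,\Delta_2)\to C$ infer $\Xi(\Delta_1,\Phi,!A,\Delta_2)\to C$; ($!P_2$) the converse; ($!R$) from $!A_1,\dots,!A_n\to B$ infer $!A_1,\dots,!A_n\to!B$ ($n\ge1$); ($!C$) from $\Xi(!A_1,\dots,!A_n,\Gamma_1,[!A_1,\dots,!A_n,\Gamma_2],\Gamma_3)\to C$ infer $\Xi(!A_1,\dots,!A_n,\Gamma_1,\Gamma_2,\Gamma_3)\to C$ ($n\ge1$); (cut) from $\Pi\to A$ and $\Xi(\Gamma_1,A,\Gamma_2)\to C$ infer $\Xi(\Gamma_1,\Pi,\Gamma_2)\to C$. Bracket-free calculus $\mathcal{E}^{\mathrm{mult}}$: formulae without bracket modalities; sequents $\Pi\to A$, $\Pi$ a finite sequence of formulae; axioms $A\to A$, $\Lambda\to\mathbf1$; rules ($\backslash L$) from $\Pi\to A$ and $\Delta_1,B,\Delta_2\to C$ infer $\Delta_1,\Pi,A\backslash B,\Delta_2\to C$; ($\backslash R$) from $A,\Pi\to B$ infer $\Pi\to A\backslash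 B$; ($/L$) from $\Pi\to A$ and $\Delta_1,B,\Delta_2\to C$ infer $\Delta_1,B/A,\Pi,\Delta_2\to C$; ($/R$) from $\Pi,A\to B$ infer $\Pi\to B/A$; ($\cdot L$), ($\cdot R$), ($\mathbf1L$) standard; ($!R$) from $!A_1,\dots,!A_n\to B$ infer $!A_1,\dots,!A_n\to!B$ ($n\geq0$); ($!L$) from $\Delta_1,A,\Delta_2\to C$ infer $\Delta_1,!A,\Delta_2\to C$; ($!P_1$), ($!P_2$) permuting $!A$ with any sequence $\Phi$ in either direction; ($!C$) from $\Delta_1,!A,!A,\Delta_2\to C$ infer $\Delta_1,!A,\Delta_2\to C$; ($!W$) from $\Delta_1,\Delta_2\to C$ infer $\Delta_1,!A,\Delta_2\to C$; (cut). The projection $\pi_q$ maps formulae by $\pi_q(q)=\mathbf1$, $\pi_q(p)=p$ for variables $p\ne q$, $\pi_q(\mathbf1)=\mathbf1$, commuting with $\backslash,/,\cdot,!$, and $\pi_q(\langle\rangle A)=\pi_q([]^{-1}A)=\pi_q(A)$; on meta-formulae it is applied elementwise and erases brackets ($\pi_q([\Xi])=\pi_q(\Xi)$). For a sequence $E_1,\dots,E_k$ of formulae, $\prod(E_1,\dots,E_k)=E_1\cdot\ldots\cdot E_k$. *)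

From Stdlib Require Import List Arith.
Import ListNotations.

(** Formulae of the bracketed language: variables (indexed by nat), 1,
    \ , / , product, <> (Diam), []^{-1} (Box), ! (Bang). *)
Inductive fm : Type :=
| Var : nat -> fm
| One : fm
| LDiv : fm -> fm -> fm
| RDiv : fm -> fm -> fm
| Prod : fm -> fm -> fm
| Diam : fm -> fm
| Box  : fm -> fm
| Bang : fm -> fm.

Inductive tree : Type :=
| Fm : fm -> tree
| Br : list tree -> tree.

Definition meta := list tree.

(** Contexts Xi(_): the hole is either Xi itself or the full content of a
    bracket at any depth. *)
Inductive ctx : Type :=
| Hole : ctx
| InBr : meta -> ctx -> meta -> ctx.

Fixpoint plug (c : ctx) (Th : meta) : meta :=
  match c with
  | Hole => Th
  | InBr l c' r => l ++ Br (plug c' Th) :: r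
  end.

Definition bangs (As : list fm) : meta := map (fun A => Fm (Bang A)) As.

(** The stoup-free bracketed calculus F^mult_2015. *)
Inductive derF : meta -> fm -> Prop :=
| F_ax : forall A, derF [Fm A] A
| F_one : derF [] One
| F_RDivL : forall c G B D1 C D2 D,
    derF G B -> derF (plug c (D1 ++ Fm C :: D2)) D ->
    derF (plug c (D1 ++ Fm (RDiv C B) :: G ++ D2)) D
| F_RDivR : forall G B C, derF (G ++ [Fm B]) C -> derF G (RDiv C B)
| F_LDivL : forall c G A D1 C D2 D,
    derF G A -> derF (plug c (D1 ++ Fm C :: D2)) D ->
    derF (plug c (D1 ++ G ++ Fm (LDiv A C) :: D2)) D
| F_LDivR : forall G A C, derF (Fm A :: G) C -> derF G (LDiv A C)
| F_ProdL : forall c D1 A B D2 D,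
    derF (plug c (D1 ++ Fm A :: Fm B :: D2)) D ->
    derF (plug c (D1 ++ Fm (Prod A B) :: D2)) D
| F_ProdR : forall D G A B, derF D A -> derF G B -> derF (D ++ G) (Prod A B)
| F_OneL : forall c D1 D2 A,
    derF (plug c (D1 ++ D2)) A -> derF (plug c (D1 ++ Fm One :: D2)) A
| F_BoxL : forall c D1 A D2 B,
    derF (plug c (D1 ++ Fm A :: D2)) B ->
    derF (plug c (D1 ++ Br [Fm (Box A)] :: D2)) B
| F_BoxR : forall X A, derF [Br X] A -> derF X (Box A)
| F_DiamL : forall c D1 A D2 B,
    derF (plug c (D1 ++ Br [Fm A] :: D2)) B ->
    derF (plug c (D1 ++ Fm (Diam A) :: D2)) B
| F_DiamR : forall X A, derF X A -> derF [Br X] (Diam A)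
| F_BangL : forall c D1 A D2 C,
    derF (plug c (D1 ++ Fm A :: D2)) C ->
    derF (plug c (D1 ++ Fm (Bang A) :: D2)) C
| F_BangP1 : forall c D1 A P D2 C,
    derF (plug c (D1 ++ Fm (Bang A) :: P ++ D2)) C ->
    derF (plug c (D1 ++ P ++ Fm (Bang A) :: D2)) C
| F_BangP2 : forall c D1 A P D2 C,
    derF (plug c (D1 ++ P ++ Fm (Bang A) :: D2)) C ->
    derF (plug c (D1 ++ Fm (Bang A) :: P ++ D2)) C
| F_BangR : forall As B, As <> [] ->
    derF (bangs As) B -> derF (bangs As) (Bang B)
| F_BangC : forall c As G1 G2 G3 C, As <> [] ->
    derF (plug c (bangs As ++ G1 ++ Br (bangs As ++ G2) :: G3)) C ->
    derF (plug c (bangs As ++ G1 ++ G2 ++ G3)) C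
| F_cut : forall c P A G1 G2 C,
    derF P A -> derF (plug c (G1 ++ Fm A :: G2)) C ->
    derF (plug c (G1 ++ P ++ G2)) C.

Inductive efm : Type :=
| EVar : nat -> efm
| EOne : efm
| ELDiv : efm -> efm -> efm
| ERDiv : efm -> efm -> efm
| EProd : efm -> efm -> efm
| EBang : efm -> efm.

Definition ebangs (As : list efm) : list efm := map EBang As.

Inductive derE : list efm -> efm -> Prop :=
| E_ax : forall A, derE [A] A
| E_one : derE [] EOne
| E_LDivL : forall P A D1 B D2 C,
    derE P A -> derE (D1 ++ B :: D2) C ->
    derE (D1 ++ P ++ ELDiv A B :: D2) C
| E_LDivR : forall A P B, derE (A :: P) B -> derE P (ELDiv A B)
| E_RDivL : forall P A D1 B D2 C,
    derE P A -> derE (D1 ++ B :: D2) C ->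
    derE (D1 ++ ERDiv B A :: P ++ D2) C
| E_RDivR : forall P A B, derE (P ++ [A]) B -> derE P (ERDiv B A)
| E_ProdL : forall D1 A B D2 C,
    derE (D1 ++ A :: B :: D2) C -> derE (D1 ++ EProd A B :: D2) C
| E_ProdR : forall D G A B, derE D A -> derE G B -> derE (D ++ G) (EProd A B)
| E_OneL : forall D1 D2 C, derE (D1 ++ D2) C -> derE (D1 ++ EOne :: D2) C
| E_BangR : forall As B, derE (ebangs As) B -> derE (ebangs As) (EBang B)
| E_BangL : forall D1 A D2 C, derE (D1 ++ A :: D2) C -> derE (D1 ++ EBang A :: D2) C
| E_BangP1 : forall D1 A P D2 C,
    derE (D1 ++ EBang A :: P ++ D2) C -> derE (D1 ++ P ++ EBang A :: D2) C
| E_BangP2 : forall D1 A P D2 C,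
    derE (D1 ++ P ++ EBang A :: D2) C -> derE (D1 ++ EBang A :: P ++ D2) C
| E_BangC : forall D1 A D2 C,
    derE (D1 ++ EBang A :: EBang A :: D2) C -> derE (D1 ++ EBang A :: D2) C
| E_BangW : forall D1 A D2 C, derE (D1 ++ D2) C -> derE (D1 ++ EBang A :: D2) C
| E_cut : forall P A G1 G2 C,
    derE P A -> derE (G1 ++ A :: G2) C -> derE (G1 ++ P ++ G2) C.

Fixpoint piq (q : nat) (A : fm) : efm :=
  match A with
  | Var p => if Nat.eqb p q then EOne else EVar p
  | One => EOne
  | LDiv A C => ELDiv (piq q A) (piq q C)
  | RDiv C B => ERDiv (piq q C) (piq q B)
  | Prod A B => EProd (piq q A) (piq q B)
  | Diam A => piq q A
  | Box A => piq q A
  | Bang A => EBang (piq q A)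
  end.

Fixpoint eprod (l : list efm) : efm :=
  match l with
  | [] => EOne
  | [E] => E
  | E :: l' => EProd E (eprod l')
  end.

Fixpoint mult_noq (q : nat) (A : fm) : Prop :=
  match A with
  | Var p => p <> q
  | LDiv A C => mult_noq q A /\ mult_noq q C
  | RDiv C B => mult_noq q C /\ mult_noq q B
  | Prod A B => mult_noq q A /\ mult_noq q B
  | _ => False
  end.

Definition Phi_fms (s : nat) (As : list fm) : list fm :=
  flat_map (fun A => [Bang (RDiv (RDiv (Var s) (Var s)) (Bang (Box A))); Bang (Box A)]) As.

Definition Phi (s : nat) (As : list fm) : meta := map Fm (Phi_fms s As).

From Stdlib Require Import List.
Import ListNotations.

(* In each block [!((s/s)/![]^{-1}A), ![]^{-1}A] of Phi, dereliction lets the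
   first formula consume the second, leaving s/s, which the final s absorbs.
   An occurrence of A anywhere in the antecedent can be turned into
   [[]^{-1}A] by ([]^{-1}L) and then into [![]^{-1}A] by (!L); this bracketed
   copy is erased by (!C) against the ![]^{-1}A of Phi.  Under pi_q the block
   becomes !((s/s)/!A), !A: the first formula is derivable from nothing by
   weakening, the second from !A. *)

Lemma derF_cast G G' C : derF G C -> G = G' -> derF G' C.
Proof. now intros ? <-. Qed.

Lemma derE_cast G G' C : derE G C -> G = G' -> derE G' C.
Proof. now intros ? <-. Qed.

Ltac list_eq := simpl; rewrite <- ?app_assoc; simpl; rewrite ?app_nil_r; reflexivity.

Lemma Phi_cons s A As :
  Phi s (A :: As) =
  Fm (Bang (RDiv (RDiv (Var s) (Var s)) (Bang (Box A)))) :: Fm (Bang (Box A)) :: Phi s As.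
Proof. reflexivity. Qed.

Lemma Phi_app s As Bs : Phi s (As ++ Bs) = Phi s As ++ Phi s Bs.
Proof. unfold Phi, Phi_fms. now rewrite flat_map_app, map_app. Qed.

Lemma Phi_split_bang_box s A As :
  In A As -> exists P R, Phi s As = P ++ Fm (Bang (Box A)) :: R.
Proof.
  intros HA. destruct (in_split _ _ HA) as (As1 & As2 & ->).
  exists (Phi s As1 ++ [Fm (Bang (RDiv (RDiv (Var s) (Var s)) (Bang (Box A))))]), (Phi s As2).
  rewrite Phi_app, Phi_cons. list_eq.
Qed.

Lemma derF_RDivL_head C B G D E :
  derF G B -> derF (Fm C :: D) E -> derF (Fm (RDiv C B) :: G ++ D) E.
Proof. intros HB HC. exact (F_RDivL Hole G B [] C D E HB HC). Qed.

Lemma derF_unit_block S B G :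
  derF G S ->
  derF (Fm (Bang (RDiv (RDiv S S) (Bang B))) :: Fm (Bang B) :: G) S.
Proof.
  intros HG.
  assert (HSS : derF (Fm (RDiv S S) :: G) S).
  { apply (derF_cast (Fm (RDiv S S) :: G ++ [])); [|now rewrite app_nil_r].
    exact (derF_RDivL_head _ _ _ _ _ HG (F_ax S)). }
  apply (F_BangL Hole []).
  exact (derF_RDivL_head _ _ [Fm (Bang B)] G _ (F_ax _) HSS).
Qed.

Lemma derF_Phi_s s As : derF (Phi s As ++ [Fm (Var s)]) (Var s).
Proof.
  induction As as [|A As IH]; [apply F_ax|].
  rewrite Phi_cons. exact (derF_unit_block _ _ _ IH).
Qed.

Lemma derF_drop_under_bang_box P A G1 G2 C :
  derF (P ++ Fm (Bang (Box A)) :: G1 ++ Fm A :: G2) C ->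
  derF (P ++ Fm (Bang (Box A)) :: G1 ++ G2) C.
Proof.
  set (Q := P ++ Fm (Bang (Box A)) :: G1).
  intros H.
  assert (Hbox : derF (Q ++ Br [Fm (Box A)] :: G2) C).
  { apply (F_BoxL Hole Q A G2). eapply derF_cast; [exact H|]. unfold Q. list_eq. }
  assert (Hbang : derF (Q ++ Br [Fm (Bang (Box A))] :: G2) C)
    by exact (F_BangL (InBr Q Hole G2) [] (Box A) [] C Hbox).
  assert (Hfront : derF (Fm (Bang (Box A)) :: P ++ G1 ++ Br [Fm (Bang (Box A))] :: G2) C).
  { apply (F_BangP2 Hole []). eapply derF_cast; [exact Hbang|]. unfold Q. list_eq. }
  assert (Hcontr : derF (bangs [Box A] ++ (P ++ G1) ++ [] ++ G2) C).
  { apply (F_BangC Hole); [discriminate|]. eapply derF_cast; [exact Hfront|]. list_eq. }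
  apply (F_BangP1 Hole []). eapply derF_cast; [exact Hcontr|]. list_eq.
Qed.

Lemma derF_Phi_drop s As A D1 D2 C :
  In A As ->
  derF (Phi s As ++ D1 ++ Fm A :: D2) C -> derF (Phi s As ++ D1 ++ D2) C.
Proof.
  intros HA. destruct (Phi_split_bang_box s A As HA) as (P & R & ->).
  intros H.
  apply (derF_cast (P ++ Fm (Bang (Box A)) :: (R ++ D1) ++ D2)); [|list_eq].
  apply derF_drop_under_bang_box. eapply derF_cast; [exact H|]. list_eq.
Qed.

(* [eprod [a] = a] rather than [a . 1], so the last factor needs (1L) and a cut. *)
Lemma derE_eprod_cons D G a l :
  derE D a -> derE G (eprod l) -> derE (D ++ G) (eprod (a :: l)).
Proof.
  intros Ha Hl. destruct l as [|b l].
  - assert (Ha1 : derE (D ++ [EOne]) a) by (apply E_OneL; now rewrite app_nil_r).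
    apply (derE_cast (D ++ G ++ [])); [|now rewrite app_nil_r].
    exact (E_cut G EOne D [] a Hl Ha1).
  - exact (E_ProdR D G a _ Ha Hl).
Qed.

Lemma derE_bang_unit S a : derE [] (EBang (ERDiv (ERDiv S S) (EBang a))).
Proof.
  apply (E_BangR []), E_RDivR, (E_RDivR [EBang a]).
  exact (E_BangW [] a [S] S (E_ax S)).
Qed.

Lemma derE_Phi_projection s q As :
  derE (ebangs (map (piq q) As)) (eprod (map (piq q) (Phi_fms s As))).
Proof.
  induction As as [|A As IH]; [apply E_one|].
  apply (derE_eprod_cons []); [apply derE_bang_unit|].
  exact (derE_eprod_cons [EBang (piq q A)] _ _ _ (E_ax _) IH).
Qed.

Theorem proposition7 (s q : nat) (As : list fm) :
  s <> q ->
  (forall A, In A As -> mult_noq q A) ->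
  derF (Phi s As ++ [Fm (Var s)]) (Var s) /\
  (forall A, In A As -> forall (D1 D2 : meta) (C : fm),
      derF (Phi s As ++ D1 ++ Fm A :: D2) C -> derF (Phi s As ++ D1 ++ D2) C) /\
  derE (ebangs (map (piq q) As)) (eprod (map (piq q) (Phi_fms s As))).
Proof.
  intros _ _.
  split; [apply derF_Phi_s|].
  split; [intros A HA D1 D2 C; exact (derF_Phi_drop s As A D1 D2 C HA)|].
  apply derE_Phi_projection.
Qed.
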